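(* Let $t_o<t_f$ be nonnegative integers, let $p:\{t_o,\dots,t_f-1\}\to\mathbb{R}$ and $q:\{t_o,\dots,t_f-1\}\to\mathbb{R}_{\ge0}$ satisfy $q(t)=0\implies p(t)=0$ for every $t$, and let $r(\tau)=\alpha\tau$ for integers $\tau>0$, with $\alpha\in\mathbb{R}$. For integers $t_o\le t_0<t_1\le t_f$ with $\sum_{t=t_0}^{t_1-1}q(t)>0$ define $$\psi(t_0,t_1)=\frac{\sum_{t=t_0}^{t_1-1}p(t)+r(t_1-t_0)}{\sum_{t=t_0}^{t_1-1}q(t)}.$$ Let $\Psi$ be the set of integer pairs with $t_o\le t_0<t_1\le t_f$, $\Psi_q=\{(t_0,t_1)\in\Psi:q(t)=0\ \text{for all } t_0\le t<t_1\}$, and $\tilde\Psi_q=\{t\in\{t_o,\dots,t_f-1\}:q(t)=0\}$. Then: (i) if $r(\tau)\le0$ for all $\tau\in\mathbb{Z}_{>0}$, $\displaystyle\max_{(t_0,t_1)\in\Psi\setminus\Psi_q}\psi(t_0,t_1)=\max_{t\in\{t_o,\dots,t_f-1\}\setminus\tilde\Psi_q}\psi(t,t+1)$; (ii) if $r(\tau)\ge0$ for all $\tau\in\mathbb{Z}_{>0}$, $\displaystyle\min_{(t_0,t_1)\in\Psi\setminus\Psi_q}\psi(t_0,t_1)=\min_{t\in\{t_o,\dots,t_f-1\}\setminus\tilde\Psi_q}\psi(t,t+1)$; where $\psi(t,t+1)=\dfrac{p(t)+r(1)}{q(t)}$.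
   Context: This is the discrete-time fractional function $\frac{\sum p+r}{\sum q+s}$ with the discrete linear map $s$ in the denominator identically zero; $r:\mathbb{Z}_{>0}\to\mathbb{R}$ is a discrete linear mapping. *)

From mathcomp Require Import all_boot all_order all_algebra.
Set Implicit Arguments. Unset Strict Implicit. Unset Printing Implicit Defensive.
Import Order.TTheory GRing.Theory Num.Theory.
Local Open Scope ring_scope.

Definition rlin (R : realFieldType) (alpha : R) (tau : nat) : R := alpha * tau%:R.

Definition psi (R : realFieldType) (p q : nat -> R) (alpha : R) (t0 t1 : nat) : R :=
  (\sum_(t0 <= t < t1) p t + rlin alpha (t1 - t0)) / (\sum_(t0 <= t < t1) q t).

Definition in_Psi_minus_Psiq (R : realFieldType) (q : nat -> R) (to tf t0 t1 : nat) : Prop :=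
  [/\ (to <= t0)%N, (t0 < t1)%N, (t1 <= tf)%N & exists t, (t0 <= t < t1)%N /\ q t != 0].

Definition pair_vals (R : realFieldType) (p q : nat -> R) (alpha : R) (to tf : nat) (v : R) : Prop :=
  exists t0 t1, in_Psi_minus_Psiq q to tf t0 t1 /\ v = psi p q alpha t0 t1.

Definition single_vals (R : realFieldType) (p q : nat -> R) (alpha : R) (to tf : nat) (v : R) : Prop :=
  exists t, [/\ (to <= t < tf)%N, q t != 0 & v = psi p q alpha t t.+1].

Definition is_max (R : realFieldType) (S : R -> Prop) (M : R) : Prop :=
  S M /\ forall v, S v -> v <= M.
Definition is_min (R : realFieldType) (S : R -> Prop) (M : R) : Prop :=
  S M /\ forall v, S v -> M <= v.

(** Because q >= 0 and r is linear, psi(t0,t1) is the mediant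
    (sum_t (p t + alpha)) / (sum_t q t) of the one-step ratios
    (p t + alpha) / q t, t0 <= t < t1.  A mediant lies between the smallest
    and the largest of the ratios with q t <> 0, provided the steps with
    q t = 0, which add alpha to the numerator and nothing to the denominator,
    push it the right way: this is the sign condition on r.  Hence every value
    of psi on Psi \ Psi_q is dominated (resp. undercut) by a one-step value,
    and the extremum over pairs is the extremum over single steps. *)

From mathcomp Require Import all_boot all_order all_algebra.
Import Order.TTheory GRing.Theory Num.Theory.
Local Open Scope ring_scope.

Lemma mediant_le_ratio (R : realFieldType) (I : eqType) (r : seq I) (a b : I -> R) j :
  j \in r -> b j != 0 -> (forall i, i \in r -> 0 <= b i) ->
  (forall i, i \in r -> b i = 0 -> a i <= 0) ->
  exists2 i, (i \in r) && (b i != 0) &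
    (\sum_(k <- r) a k) / (\sum_(k <- r) b k) <= a i / b i.
Proof.
move=> rj bj_neq0 b_ge0 a_le0.
set m := _ / _.
have sumb_neq0 : \sum_(k <- r) b k != 0.
  rewrite big_seq psumr_eq0 //; apply: contra bj_neq0 => /allP/(_ j rj).
  by rewrite rj.
have [/hasP[i ri /andP[bi_neq0 le_m]] | /hasPn ratio_lt] :=
  boolP (has (fun i => (b i != 0) && (m <= a i / b i)) r).
  by exists i; rewrite ?ri.
have gap_ge0 i : i \in r -> 0 <= m * b i - a i.
  move=> ri; rewrite subr_ge0; have [bi0 | bi_neq0] := eqVneq (b i) 0.
    by rewrite bi0 mulr0 a_le0.
  have bi_gt0 : 0 < b i by rewrite lt_def bi_neq0 b_ge0.
  move: (ratio_lt i ri); rewrite bi_neq0 -ltNge => /ltW.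
  by rewrite ler_pdivrMr.
have : \sum_(k <- r | k \in r) (m * b k - a k) == 0.
  by rewrite -big_seq sumrB -mulr_sumr divfK // subrr.
rewrite psumr_eq0 // => /allP/(_ j rj); rewrite rj subr_eq0 => /eqP amj.
by move: (ratio_lt j rj); rewrite bj_neq0 -amj mulfK // lexx.
Qed.

Lemma mediant_ge_ratio (R : realFieldType) (I : eqType) (r : seq I) (a b : I -> R) j :
  j \in r -> b j != 0 -> (forall i, i \in r -> 0 <= b i) ->
  (forall i, i \in r -> b i = 0 -> 0 <= a i) ->
  exists2 i, (i \in r) && (b i != 0) &
    a i / b i <= (\sum_(k <- r) a k) / (\sum_(k <- r) b k).
Proof.
move=> rj bj_neq0 b_ge0 a_ge0.
have [|i ri] := @mediant_le_ratio _ _ r (fun k => - a k) b j rj bj_neq0 b_ge0.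
  by move=> i ri /(a_ge0 i ri); rewrite oppr_le0.
by rewrite sumrN !mulNr lerN2; exists i.
Qed.

Section Dominated.
Variables (R : realFieldType) (S T : R -> Prop).
Hypothesis sub_TS : forall v, T v -> S v.

Lemma is_max_dominated M : (forall v, S v -> exists2 w, T w & v <= w) ->
  is_max S M <-> is_max T M.
Proof.
move=> S_le_T; split=> [[SM M_ge] | [TM M_ge]].
  have [w Tw le_Mw] := S_le_T M SM.
  have eq_Mw : M = w by apply/le_anti; rewrite le_Mw (M_ge _ (sub_TS _ Tw)).
  by rewrite eq_Mw in M_ge *; split=> // v /sub_TS/M_ge.
split=> [|v /S_le_T[w Tw le_vw]]; first exact: sub_TS.
exact: le_trans le_vw (M_ge w Tw).
Qed.

Lemma is_min_dominated M : (forall v, S v -> exists2 w, T w & w <= v) ->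
  is_min S M <-> is_min T M.
Proof.
move=> S_ge_T; split=> [[SM M_le] | [TM M_le]].
  have [w Tw le_wM] := S_ge_T M SM.
  have eq_Mw : M = w by apply/le_anti; rewrite le_wM (M_le _ (sub_TS _ Tw)).
  by rewrite eq_Mw in M_le *; split=> // v /sub_TS/M_le.
split=> [|v /S_ge_T[w Tw le_wv]]; first exact: sub_TS.
exact: le_trans (M_le w Tw) le_wv.
Qed.

End Dominated.

Section Psi.
Variables (R : realFieldType) (p q : nat -> R) (alpha : R) (to tf : nat).
Hypothesis q_ge0 : forall t, (to <= t < tf)%N -> 0 <= q t.
Hypothesis q0_p0 : forall t, (to <= t < tf)%N -> q t = 0 -> p t = 0.

Lemma psi_sumE t0 t1 :
  psi p q alpha t0 t1 = (\sum_(t0 <= t < t1) (p t + alpha)) / \sum_(t0 <= t < t1) q t.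
Proof. by rewrite /psi big_split /= sumr_const_nat /rlin mulr_natr. Qed.

Lemma psi1E t : psi p q alpha t t.+1 = (p t + alpha) / q t.
Proof. by rewrite psi_sumE !big_nat1. Qed.

Lemma single_vals_pair_vals v :
  single_vals p q alpha to tf v -> pair_vals p q alpha to tf v.
Proof.
case=> t [/andP[to_le_t t_lt_tf] qt_neq0 ->].
by exists t, t.+1; split=> //; split=> //; exists t; rewrite leqnn ltnSn.
Qed.

Lemma in_Psi_range {t0 t1} : in_Psi_minus_Psiq q to tf t0 t1 ->
  forall t, t \in index_iota t0 t1 -> (to <= t < tf)%N.
Proof.
case=> to_le_t0 _ t1_le_tf _ t; rewrite mem_index_iota => /andP[t0_le_t t_lt_t1].
by rewrite (leq_trans to_le_t0 t0_le_t) (leq_trans t_lt_t1 t1_le_tf).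
Qed.

Lemma pair_vals_le_single_vals : alpha <= 0 -> forall v,
  pair_vals p q alpha to tf v -> exists2 w, single_vals p q alpha to tf w & v <= w.
Proof.
move=> alpha_le0 v [t0 [t1 [Psi01 ->]]].
have in_range := in_Psi_range Psi01.
have [_ _ _ [t [t_in qt_neq0]]] := Psi01; rewrite -mem_index_iota in t_in.
have [||s /andP[s_in qs_neq0] le_psi] :=
  @mediant_le_ratio _ _ _ (fun t => p t + alpha) q t t_in qt_neq0.
- by move=> i /in_range; apply: q_ge0.
- by move=> i /in_range i_in qi0; rewrite q0_p0 // add0r.
exists (psi p q alpha s s.+1); last by rewrite psi1E psi_sumE.
by exists s; split; rewrite ?in_range.
Qed.

Lemma pair_vals_ge_single_vals : 0 <= alpha -> forall v,
  pair_vals p q alpha to tf v -> exists2 w, single_vals p q alpha to tf w & w <= v.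
Proof.
move=> alpha_ge0 v [t0 [t1 [Psi01 ->]]].
have in_range := in_Psi_range Psi01.
have [_ _ _ [t [t_in qt_neq0]]] := Psi01; rewrite -mem_index_iota in t_in.
have [||s /andP[s_in qs_neq0] le_psi] :=
  @mediant_ge_ratio _ _ _ (fun t => p t + alpha) q t t_in qt_neq0.
- by move=> i /in_range; apply: q_ge0.
- by move=> i /in_range i_in qi0; rewrite q0_p0 // add0r.
exists (psi p q alpha s s.+1); last by rewrite psi1E psi_sumE.
by exists s; split; rewrite ?in_range.
Qed.

End Psi.

Theorem corollary2 (R : realFieldType) (to tf : nat) (p q : nat -> R) (alpha : R)
  (htotf : (to < tf)%N)
  (hq0 : forall t, (to <= t < tf)%N -> 0 <= q t)
  (hqp : forall t, (to <= t < tf)%N -> q t = 0 -> p t = 0) :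
  ((forall tau, (0 < tau)%N -> rlin alpha tau <= 0) ->
     forall M, is_max (pair_vals p q alpha to tf) M <-> is_max (single_vals p q alpha to tf) M)
  /\
  ((forall tau, (0 < tau)%N -> 0 <= rlin alpha tau) ->
     forall M, is_min (pair_vals p q alpha to tf) M <-> is_min (single_vals p q alpha to tf) M).
Proof.
have rlin1 : rlin alpha 1 = alpha by rewrite /rlin mulr1.
split=> [r_le0 | r_ge0] M.
- apply: is_max_dominated; first exact: single_vals_pair_vals.
  by apply: pair_vals_le_single_vals; rewrite // -rlin1 r_le0.
- apply: is_min_dominated; first exact: single_vals_pair_vals.
  by apply: pair_vals_ge_single_vals; rewrite // -rlin1 r_ge0.
Qed.
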